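(* Let $q\in\,]0,1[$, $\omega\ge 0$, and let $I$ be an interval containing $\omega_0:=\omega/(1-q)$. Let $\alpha,\beta\in\mathbb{R}$ and let $f,g:I\to\mathbb{R}$ be Hahn symmetric differentiable on $I$. Then for every $t\in I^{q,\omega}$: 1. $\tilde D_{q,\omega}[\alpha f+\beta g](t)=\alpha\tilde D_{q,\omega}[f](t)+\beta\tilde D_{q,\omega}[g](t)$; 2. $\tilde D_{q,\omega}[fg](t)=\tilde D_{q,\omega}[f](t)\,g(\sigma(t))+f(\sigma^{-1}(t))\,\tilde D_{q,\omega}[g](t)$; 3. if $g(\sigma(t))\,g(\sigma^{-1}(t))\neq 0$, then $\tilde D_{q,\omega}[f/g](t)=\dfrac{\tilde D_{q,\omega}[f](t)\,g(\sigma^{-1}(t))-f(\sigma^{-1}(t))\,\tilde D_{q,\omega}[g](t)}{g(\sigma(t))\,g(\sigma^{-1}(t))}$; 4. $\tilde D_{q,\omega}[f]\equiv 0$ (on $I^{q,\omega}$) if and only if $f$ is constant on $I$.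
   Context: $\sigma(t):=qt+\omega$, $\sigma^{-1}(t):=q^{-1}(t-\omega)$, and $I^{q,\omega}:=\{qt+\omega:t\in I\}\subseteq I$. The Hahn symmetric derivative of $f:I\to\mathbb{R}$ is defined, for $t\in I^{q,\omega}\setminus\{\omega_0\}$, by $$\tilde D_{q,\omega}[f](t):=\frac{f(qt+\omega)-f(q^{-1}(t-\omega))}{(q-q^{-1})t+(1+q^{-1})\omega}=\frac{f(\sigma(t))-f(\sigma^{-1}(t))}{\sigma(t)-\sigma^{-1}(t)},$$ and $\tilde D_{q,\omega}[f](\omega_0):=f'(\omega_0)$ (classical derivative), provided $f$ is differentiable at $\omega_0$ in the classical sense. ''Hahn symmetric differentiable on $I$'' means that $\tilde D_{q,\omega}[f](t)$ is defined for all $t\in I^{q,\omega}$, i.e. in particular $f$ is classically differentiable at $\omega_0$. *)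

From Stdlib Require Import Reals Lra ClassicalEpsilon.
Open Scope R_scope.

Definition hsigma (q w t : R) : R := q * t + w.
Definition hsigma_inv (q w t : R) : R := / q * (t - w).

Definition omega0 (q w : R) : R := w / (1 - q).

Definition is_interval (I : R -> Prop) : Prop :=
  forall x y z, I x -> I z -> x <= y <= z -> I y.

Definition Iqw (q w : R) (I : R -> Prop) (t : R) : Prop :=
  exists s, I s /\ t = q * s + w.

(* classical derivative of f : I -> R at x (relative to I; one-sided if x is
   an endpoint of I), equal to l *)
Definition deriv_within (I : R -> Prop) (f : R -> R) (x l : R) : Prop :=
  forall eps, 0 < eps -> exists delta, 0 < delta /\
    forall y, I y -> y <> x -> Rabs (y - x) < delta ->
      Rabs ((f y - f x) / (y - x) - l) < eps.

(* the value f'(x) (meaningful when f is differentiable at x) *)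
Definition classical_deriv (I : R -> Prop) (f : R -> R) (x : R) : R :=
  epsilon (inhabits 0) (fun l => deriv_within I f x l).

Definition hahn_sym_D (q w : R) (I : R -> Prop) (f : R -> R) (t : R) : R :=
  if Req_EM_T t (omega0 q w) then classical_deriv I f t
  else (f (hsigma q w t) - f (hsigma_inv q w t)) / (hsigma q w t - hsigma_inv q w t).

(* f is Hahn symmetric differentiable on I: tilde D f(t) defined for all
   t in I^{q,omega}, i.e. f is classically differentiable at omega_0 *)
Definition hahn_sym_differentiable (q w : R) (I : R -> Prop) (f : R -> R) : Prop :=
  exists l, deriv_within I f (omega0 q w) l.

(* At t <> omega0 the Hahn symmetric derivative is a difference quotient with a
   nonzero denominator, so rules 1-3 are field identities; at the fixed point
   omega0 of sigma it is the classical derivative, for which they are the usual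
   sum, product and quotient rules (sigma and sigma^-1 both fix omega0).
   For rule 4, a vanishing derivative gives f (sigma (sigma s)) = f s on I; as
   sigma o sigma contracts I towards omega0 by the factor q^2, iterating and
   using continuity of f at omega0 shows f = f omega0 on I. *)

From Stdlib Require Import Reals Lra ClassicalEpsilon.
Open Scope R_scope.

Definition diff_quot (f : R -> R) (x y : R) : R := (f y - f x) / (y - x).

Definition punctured (I : R -> Prop) (x y : R) : Prop := I y /\ y <> x.

Lemma limit1_in_const (c : R) (D : R -> Prop) (x0 : R) :
  limit1_in (fun _ => c) D c x0.
Proof. exact (limit_free (fun _ => c) D 0 x0). Qed.

Lemma limit1_in_ext_near (f g : R -> R) (D : R -> Prop) (l x0 d : R) :
  0 < d -> (forall y, D y -> Rabs (y - x0) < d -> f y = g y) ->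
  limit1_in f D l x0 -> limit1_in g D l x0.
Proof.
  unfold limit1_in, limit_in; simpl; unfold Rdist.
  intros Hd Hfg Hf eps Heps.
  destruct (Hf eps Heps) as [d' [Hd' Hnear]].
  exists (Rmin d d'); split; [now apply Rmin_glb_lt|].
  intros y [Dy Hy].
  rewrite <- Hfg; [| exact Dy | exact (Rlt_le_trans _ _ _ Hy (Rmin_l _ _))].
  apply Hnear; split; [exact Dy | exact (Rlt_le_trans _ _ _ Hy (Rmin_r _ _))].
Qed.

Lemma limit1_in_ext (f g : R -> R) (D : R -> Prop) (l x0 : R) :
  (forall y, D y -> f y = g y) -> limit1_in f D l x0 -> limit1_in g D l x0.
Proof.
  intros Hfg. apply (limit1_in_ext_near f g D l x0 1); [lra|].
  intros y Dy _; exact (Hfg y Dy).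
Qed.

Lemma deriv_within_limit (I : R -> Prop) (f : R -> R) (x l : R) :
  deriv_within I f x l <-> limit1_in (diff_quot f x) (punctured I x) l x.
Proof.
  unfold deriv_within, limit1_in, limit_in, punctured, diff_quot; simpl; unfold Rdist.
  split; intros H eps Heps; destruct (H eps Heps) as [d [Hd Hnear]];
    exists d; (split; [lra|]).
  - intros y [[Iy Hyx] Hy]; exact (Hnear y Iy Hyx Hy).
  - intros y Iy Hyx Hy; exact (Hnear y (conj (conj Iy Hyx) Hy)).
Qed.

Lemma interval_convex (I : R -> Prop) (a b k : R) :
  is_interval I -> I a -> I b -> 0 <= k <= 1 -> I (a + k * (b - a)).
Proof.
  intros HI Ia Ib Hk.
  destruct (Rle_dec a b).
  - apply (HI a _ b); [exact Ia | exact Ib | split; nra].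
  - apply (HI b _ a); [exact Ib | exact Ia | split; nra].
Qed.

Section DerivWithin.

Variable I : R -> Prop.
Hypothesis I_interval : is_interval I.
Hypothesis I_nondegenerate : exists a b, I a /\ I b /\ a < b.

Lemma adhDa_punctured (x : R) : I x -> adhDa (punctured I x) x.
Proof.
  intros Ix eps Heps.
  assert (Ha : exists a, I a /\ a <> x).
  { destruct I_nondegenerate as [a [b [Ia [Ib Hab]]]].
    destruct (Req_dec a x) as [->|Hax]; [exists b | exists a]; split; auto; lra. }
  destruct Ha as [a [Ia Hax]].
  assert (Hdist : 0 < Rabs (a - x)) by (apply Rabs_pos_lt; lra).
  set (k := Rmin 1 (eps / (2 * Rabs (a - x)))).
  assert (Hk0 : 0 < k) by (apply Rmin_glb_lt; [lra | apply Rdiv_lt_0_compat; lra]).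
  assert (Hk1 : k <= 1) by apply Rmin_l.
  assert (Hk2 : k <= eps / (2 * Rabs (a - x))) by apply Rmin_r.
  exists (x + k * (a - x)); unfold punctured, Rdist; split; [split|].
  - apply interval_convex; auto; lra.
  - intro E. assert (Hz : k * (a - x) = 0) by lra.
    apply Rmult_integral in Hz; lra.
  - replace (x + k * (a - x) - x) with (k * (a - x)) by ring.
    rewrite Rabs_mult, (Rabs_right k) by lra.
    apply Rle_lt_trans with (eps / (2 * Rabs (a - x)) * Rabs (a - x)).
    + apply Rmult_le_compat_r; [apply Rabs_pos | exact Hk2].
    + field_simplify; lra.
Qed.

Lemma deriv_within_unique (f : R -> R) (x l1 l2 : R) :
  I x -> deriv_within I f x l1 -> deriv_within I f x l2 -> l1 = l2.
Proof.
  intros Ix H1 H2. apply deriv_within_limit in H1, H2.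
  exact (single_limit _ _ _ _ _ (adhDa_punctured x Ix) H1 H2).
Qed.

Lemma classical_deriv_eq (f : R -> R) (x l : R) :
  I x -> deriv_within I f x l -> classical_deriv I f x = l.
Proof.
  intros Ix Hl. unfold classical_deriv.
  apply (deriv_within_unique f x); [exact Ix | | exact Hl].
  exact (epsilon_spec (inhabits 0) (deriv_within I f x) (ex_intro _ l Hl)).
Qed.

End DerivWithin.

Lemma deriv_within_continuous (I : R -> Prop) (f : R -> R) (x l : R) :
  deriv_within I f x l -> limit1_in f (punctured I x) (f x) x.
Proof.
  intros Hl. apply deriv_within_limit in Hl.
  assert (Hlin : limit1_in (fun y => f x + diff_quot f x y * (y - x))
                   (punctured I x) (f x + l * (x - x)) x).
  { apply limit_plus; [apply limit1_in_const|].
    apply limit_mul; [exact Hl|].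
    apply limit_minus; [apply lim_x | apply limit1_in_const]. }
  replace (f x + l * (x - x)) with (f x) in Hlin by ring.
  refine (limit1_in_ext _ _ _ _ _ _ Hlin).
  intros y [_ Hyx]; unfold diff_quot; field; lra.
Qed.

Lemma deriv_within_const (I : R -> Prop) (f : R -> R) (x : R) :
  (forall y, I y -> f y = f x) -> deriv_within I f x 0.
Proof.
  intros Hconst eps Heps. exists 1; split; [lra|].
  intros y Iy _ _. rewrite Hconst by exact Iy.
  rewrite Rminus_diag, Rdiv_0_l, Rminus_0_r, Rabs_R0; exact Heps.
Qed.

Lemma deriv_within_linear (I : R -> Prop) (f g : R -> R) (x lf lg a b : R) :
  deriv_within I f x lf -> deriv_within I g x lg ->
  deriv_within I (fun y => a * f y + b * g y) x (a * lf + b * lg).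
Proof.
  rewrite !deriv_within_limit; intros Hf Hg.
  assert (Hlin := limit_plus _ _ _ _ _ _
    (limit_mul _ _ _ _ _ _ (limit1_in_const a _ x) Hf)
    (limit_mul _ _ _ _ _ _ (limit1_in_const b _ x) Hg)).
  refine (limit1_in_ext _ _ _ _ _ _ Hlin).
  intros y [_ Hyx]; unfold diff_quot; field; lra.
Qed.

Lemma deriv_within_mul (I : R -> Prop) (f g : R -> R) (x lf lg : R) :
  deriv_within I f x lf -> deriv_within I g x lg ->
  deriv_within I (fun y => f y * g y) x (lf * g x + f x * lg).
Proof.
  intros Hf Hg. assert (Cg := deriv_within_continuous I g x lg Hg).
  rewrite deriv_within_limit in Hf, Hg |- *.
  assert (Hlin := limit_plus _ _ _ _ _ _
    (limit_mul _ _ _ _ _ _ Hf Cg)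
    (limit_mul _ _ _ _ _ _ (limit1_in_const (f x) _ x) Hg)).
  refine (limit1_in_ext _ _ _ _ _ _ Hlin).
  intros y [_ Hyx]; unfold diff_quot; field; lra.
Qed.

Lemma limit1_in_neq0_near (g : R -> R) (D : R -> Prop) (l x : R) :
  limit1_in g D l x -> l <> 0 ->
  exists d, 0 < d /\ forall y, D y -> Rabs (y - x) < d -> g y <> 0.
Proof.
  unfold limit1_in, limit_in; simpl; unfold Rdist. intros Hg Hl.
  destruct (Hg (Rabs l)) as [d [Hd Hnear]]; [now apply Rabs_pos_lt|].
  exists d; split; [exact Hd|]. intros y Dy Hy E.
  specialize (Hnear y (conj Dy Hy)).
  rewrite E, Rminus_0_l, Rabs_Ropp in Hnear; lra.
Qed.

Lemma deriv_within_div (I : R -> Prop) (f g : R -> R) (x lf lg : R) :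
  deriv_within I f x lf -> deriv_within I g x lg -> g x <> 0 ->
  deriv_within I (fun y => f y / g y) x ((lf * g x - f x * lg) / (g x * g x)).
Proof.
  intros Hf Hg Hgx. assert (Cg := deriv_within_continuous I g x lg Hg).
  destruct (limit1_in_neq0_near g _ _ x Cg Hgx) as [d [Hd Hgy]].
  rewrite deriv_within_limit in Hf, Hg |- *.
  assert (Hnum := limit_minus _ _ _ _ _ _
    (limit_mul _ _ _ _ _ _ Hf (limit1_in_const (g x) _ x))
    (limit_mul _ _ _ _ _ _ (limit1_in_const (f x) _ x) Hg)).
  assert (Hden := limit_inv _ _ _ _
    (limit_mul _ _ _ _ _ _ Cg (limit1_in_const (g x) _ x))
    (Rmult_integral_contrapositive_currified _ _ Hgx Hgx)).
  refine (limit1_in_ext_near _ _ _ _ _ d Hd _ (limit_mul _ _ _ _ _ _ Hnum Hden)).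
  intros y Dy Hy. assert (Hg0 := Hgy y Dy Hy). destruct Dy as [_ Hyx].
  unfold diff_quot; field; repeat split; auto; lra.
Qed.

Lemma invariant_under_contraction_const (I : R -> Prop) (f : R -> R) (o k : R) :
  is_interval I -> I o -> 0 <= k < 1 ->
  limit1_in f (punctured I o) (f o) o ->
  (forall z, I z -> f (o + k * (z - o)) = f z) ->
  forall x, I x -> f x = f o.
Proof.
  intros HI Io Hk Cf Hinv x Ix.
  set (y := fun n : nat => o + k ^ n * (x - o)).
  assert (Hy : forall n, I (y n) /\ f (y n) = f x).
  { induction n as [|n [Iyn Hfyn]].
    - unfold y; simpl; rewrite Rmult_1_l, Rplus_minus; auto.
    - replace (y (S n)) with (o + k * (y n - o)) by (unfold y; simpl; ring).
      split; [apply interval_convex; auto; lra | rewrite Hinv; auto]. }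
  destruct (Req_dec (f x) (f o)) as [|Hne]; [assumption | exfalso].
  unfold limit1_in, limit_in in Cf; simpl in Cf; unfold Rdist in Cf.
  destruct (Cf (Rabs (f x - f o))) as [d [Hd Hnear]]; [apply Rabs_pos_lt; lra|].
  destruct (Req_dec x o) as [->|Hxo]; [contradiction|].
  assert (Hxo' : 0 < Rabs (x - o)) by (apply Rabs_pos_lt; lra).
  destruct (pow_lt_1_zero k ltac:(rewrite Rabs_right; lra) (d / Rabs (x - o))
              ltac:(apply Rdiv_lt_0_compat; lra)) as [N HN].
  specialize (HN N (le_n N)). destruct (Hy N) as [IyN HfyN].
  destruct (Req_dec (y N) o) as [E|HyNo]; [rewrite <- E, HfyN in Hne; now apply Hne|].
  specialize (Hnear (y N)). rewrite HfyN in Hnear.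
  apply (Rlt_irrefl (Rabs (f x - f o))), Hnear; split; [split; assumption|].
  unfold y; replace (o + k ^ N * (x - o) - o) with (k ^ N * (x - o)) by ring.
  rewrite Rabs_mult.
  apply Rlt_le_trans with (d / Rabs (x - o) * Rabs (x - o));
    [apply Rmult_lt_compat_r; auto | right; field; lra].
Qed.

Section HahnSymmetric.

Variables (q w : R) (I : R -> Prop).
Hypothesis q_range : 0 < q < 1.
Hypothesis I_interval : is_interval I.
Hypothesis I_nondegenerate : exists a b, I a /\ I b /\ a < b.
Hypothesis I_omega0 : I (omega0 q w).

Let o := omega0 q w.
Let sigma := hsigma q w.
Let sigma_inv := hsigma_inv q w.

Lemma hsigma_sub_omega0 (t : R) : sigma t - o = q * (t - o).
Proof. unfold sigma, o, hsigma, omega0; field; lra. Qed.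

Lemma hsigma_omega0 : sigma o = o.
Proof. pose proof (hsigma_sub_omega0 o); lra. Qed.

Lemma hsigma_inv_omega0 : sigma_inv o = o.
Proof. unfold sigma_inv, o, hsigma_inv, omega0; field; lra. Qed.

Lemma hsigma_invK (s : R) : sigma_inv (sigma s) = s.
Proof. unfold sigma_inv, sigma, hsigma_inv, hsigma; field; lra. Qed.

Lemma hsigma_sub_hsigma_inv_neq0 (t : R) : t <> o -> sigma t - sigma_inv t <> 0.
Proof.
  intros Hto.
  replace (sigma t - sigma_inv t) with ((q - / q) * (t - o))
    by (unfold sigma, sigma_inv, o, hsigma, hsigma_inv, omega0; field; lra).
  assert (1 < / q) by (rewrite <- Rinv_1; apply Rinv_lt_contravar; lra).
  apply Rmult_integral_contrapositive_currified; lra.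
Qed.

Lemma hsigma_in_interval (s : R) : I s -> I (sigma s).
Proof.
  intros Is. replace (sigma s) with (o + q * (s - o)) by (rewrite <- hsigma_sub_omega0; ring).
  apply interval_convex; auto; lra.
Qed.

Lemma hahn_sym_D_omega0 (f : R -> R) :
  hahn_sym_D q w I f o = classical_deriv I f o.
Proof. unfold hahn_sym_D; now destruct (Req_EM_T o (omega0 q w)). Qed.

Lemma hahn_sym_D_neq_omega0 (f : R -> R) (t : R) : t <> o ->
  hahn_sym_D q w I f t = (f (sigma t) - f (sigma_inv t)) / (sigma t - sigma_inv t).
Proof. unfold hahn_sym_D; now destruct (Req_EM_T t (omega0 q w)). Qed.

Lemma classical_deriv_omega0 (f : R -> R) (l : R) :
  deriv_within I f o l -> classical_deriv I f o = l.
Proof. exact (classical_deriv_eq I I_interval I_nondegenerate f o l I_omega0). Qed.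

Variables f g : R -> R.
Hypothesis f_diff : hahn_sym_differentiable q w I f.
Hypothesis g_diff : hahn_sym_differentiable q w I g.

Lemma hahn_sym_D_linear (a b t : R) :
  hahn_sym_D q w I (fun x => a * f x + b * g x) t
  = a * hahn_sym_D q w I f t + b * hahn_sym_D q w I g t.
Proof.
  destruct (Req_dec t o) as [->|Hto].
  - destruct f_diff as [lf Hf], g_diff as [lg Hg].
    rewrite !hahn_sym_D_omega0.
    rewrite (classical_deriv_omega0 f lf Hf), (classical_deriv_omega0 g lg Hg).
    apply classical_deriv_omega0, deriv_within_linear; assumption.
  - rewrite !hahn_sym_D_neq_omega0 by exact Hto.
    assert (Hden := hsigma_sub_hsigma_inv_neq0 t Hto); field; exact Hden.
Qed.

Lemma hahn_sym_D_mul (t : R) :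
  hahn_sym_D q w I (fun x => f x * g x) t
  = hahn_sym_D q w I f t * g (sigma t) + f (sigma_inv t) * hahn_sym_D q w I g t.
Proof.
  destruct (Req_dec t o) as [->|Hto].
  - destruct f_diff as [lf Hf], g_diff as [lg Hg].
    rewrite !hahn_sym_D_omega0, hsigma_omega0, hsigma_inv_omega0.
    rewrite (classical_deriv_omega0 f lf Hf), (classical_deriv_omega0 g lg Hg).
    apply classical_deriv_omega0, deriv_within_mul; assumption.
  - rewrite !hahn_sym_D_neq_omega0 by exact Hto.
    assert (Hden := hsigma_sub_hsigma_inv_neq0 t Hto); field; exact Hden.
Qed.

Lemma hahn_sym_D_div (t : R) :
  g (sigma t) * g (sigma_inv t) <> 0 ->
  hahn_sym_D q w I (fun x => f x / g x) t
  = (hahn_sym_D q w I f t * g (sigma_inv t) - f (sigma_inv t) * hahn_sym_D q w I g t)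
    / (g (sigma t) * g (sigma_inv t)).
Proof.
  intros Hgg. apply Rmult_neq_0_reg in Hgg as [Hg1 Hg2].
  destruct (Req_dec t o) as [->|Hto].
  - destruct f_diff as [lf Hf], g_diff as [lg Hg].
    rewrite !hahn_sym_D_omega0, hsigma_omega0, hsigma_inv_omega0.
    rewrite hsigma_inv_omega0 in Hg2.
    rewrite (classical_deriv_omega0 f lf Hf), (classical_deriv_omega0 g lg Hg).
    apply classical_deriv_omega0, deriv_within_div; assumption.
  - rewrite !hahn_sym_D_neq_omega0 by exact Hto.
    assert (Hden := hsigma_sub_hsigma_inv_neq0 t Hto); field; auto.
Qed.

Lemma hahn_sym_D_eq0_iff_const :
  (forall t, Iqw q w I t -> hahn_sym_D q w I f t = 0) <->
  (exists c, forall x, I x -> f x = c).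
Proof.
  split.
  - intros HD. exists (f o).
    destruct f_diff as [lf Hf].
    apply (invariant_under_contraction_const I f o (q ^ 2)); auto.
    + split; nra.
    + exact (deriv_within_continuous I f o lf Hf).
    + intros z Iz.
      replace (o + q ^ 2 * (z - o)) with (sigma (sigma z))
        by (rewrite <- (Rplus_minus o (sigma (sigma z))), !hsigma_sub_omega0; ring).
      destruct (Req_dec (sigma z) o) as [Hzo|Hzo].
      * assert (Hz : z = o).
        { pose proof (hsigma_sub_omega0 z) as E; rewrite Hzo in E.
          apply Rminus_diag_uniq, (Rmult_eq_reg_l q); lra. }
        rewrite Hz, !hsigma_omega0; reflexivity.
      * assert (Hquot := HD (sigma z) (ex_intro _ z (conj Iz eq_refl))).
        assert (Hden := hsigma_sub_hsigma_inv_neq0 _ Hzo).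
        rewrite hahn_sym_D_neq_omega0, hsigma_invK in Hquot by exact Hzo.
        rewrite hsigma_invK in Hden.
        apply Rmult_integral in Hquot as [Hnum|Hinv]; [lra|].
        exfalso; exact (Rinv_neq_0_compat _ Hden Hinv).
  - intros [c Hc] t [s [Is ->]].
    destruct (Req_dec (q * s + w) o) as [->|Hto].
    + rewrite hahn_sym_D_omega0. apply classical_deriv_omega0, deriv_within_const.
      intros y Iy; rewrite !Hc; auto.
    + rewrite hahn_sym_D_neq_omega0 by exact Hto.
      change (q * s + w) with (sigma s); rewrite hsigma_invK.
      rewrite !Hc by auto using hsigma_in_interval.
      unfold Rdiv; ring.
Qed.

End HahnSymmetric.

Theorem theorem2p8 (q w : R) (I : R -> Prop) (alpha beta : R) (f g : R -> R) :
  0 < q < 1 -> 0 <= w ->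
  is_interval I -> (exists x y, I x /\ I y /\ x < y) ->
  I (omega0 q w) ->
  hahn_sym_differentiable q w I f ->
  hahn_sym_differentiable q w I g ->
  (forall t, Iqw q w I t ->
     hahn_sym_D q w I (fun x => alpha * f x + beta * g x) t
     = alpha * hahn_sym_D q w I f t + beta * hahn_sym_D q w I g t) /\
  (forall t, Iqw q w I t ->
     hahn_sym_D q w I (fun x => f x * g x) t
     = hahn_sym_D q w I f t * g (hsigma q w t)
       + f (hsigma_inv q w t) * hahn_sym_D q w I g t) /\
  (forall t, Iqw q w I t ->
     g (hsigma q w t) * g (hsigma_inv q w t) <> 0 ->
     hahn_sym_D q w I (fun x => f x / g x) t
     = (hahn_sym_D q w I f t * g (hsigma_inv q w t)
        - f (hsigma_inv q w t) * hahn_sym_D q w I g t)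
       / (g (hsigma q w t) * g (hsigma_inv q w t))) /\
  ((forall t, Iqw q w I t -> hahn_sym_D q w I f t = 0) <->
   (exists c, forall x, I x -> f x = c)).
Proof.
  intros Hq _ HI Hnondeg Ho Hf Hg.
  split; [|split; [|split]].
  - intros t _; exact (hahn_sym_D_linear q w I Hq HI Hnondeg Ho f g Hf Hg alpha beta t).
  - intros t _; exact (hahn_sym_D_mul q w I Hq HI Hnondeg Ho f g Hf Hg t).
  - intros t _; exact (hahn_sym_D_div q w I Hq HI Hnondeg Ho f g Hf Hg t).
  - exact (hahn_sym_D_eq0_iff_const q w I Hq HI Hnondeg Ho f Hf).
Qed.
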